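(* Let $N\ge 1$ and let $U_1,\dots,U_N$ be independent real random variables, each super-uniform, i.e. $\mathbb P(U_i\le x)\le x$ for all $x\in[0,1]$ (and $\mathbb P(U_i< 0)=0$). Then for every $\delta\in(0,1]$, $$\mathbb P\Big(\forall t>0,\ \frac1N\sum_{i=1}^N \mathbf 1\{U_i\le t\}<\frac{t}{\delta}\Big)\ \ge\ 1-\delta .$$
   Context: Note the strict inequality ''$<$'' inside the probability. *)

From HB Require Import structures.
From mathcomp Require Import all_boot all_order all_algebra.
From mathcomp Require Import all_classical all_reals all_analysis.
Set Implicit Arguments. Unset Strict Implicit. Unset Printing Implicit Defensive.
Import Order.TTheory GRing.Theory Num.Theory.
Local Open Scope classical_set_scope.
Local Open Scope ring_scope.

Definition mutually_independent_rv d (T : measurableType d) (R : realType)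
  (P : probability T R) (I : finType) (X : I -> T -> R) : Prop :=
  forall (J : {set I}) (B : I -> set R),
    (forall i, i \in J -> measurable (B i)) ->
    P (\bigcap_(i in [set i | i \in J]) (X i @^-1` B i)) =
    (\prod_(i in J) P (X i @^-1` B i))%E.

Definition super_uniform d (T : measurableType d) (R : realType)
  (P : probability T R) (U : T -> R) : Prop :=
  (forall x : R, 0 <= x <= 1 -> (P [set w | (U w <= x)%R] <= x%:E)%E) /\
  P [set w | U w < 0] = 0%E.

From HB Require Import structures.
From mathcomp Require Import all_boot all_order all_algebra.
From mathcomp Require Import all_classical all_reals all_analysis.
Import Order.TTheory GRing.Theory Num.Theory.
Local Open Scope classical_set_scope.
Local Open Scope ring_scope.
Set Implicit Arguments. Unset Strict Implicit. Unset Printing Implicit Defensive.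

(* Put t_k := k delta / N.  A violation at some t > 0 is a violation at a grid
   point t_k, i.e. the Simes rank r, the largest k <= N with at least k of the
   U_i below t_k, is positive.  Recording only which cell of the grid each U_i
   falls in reduces the problem to a finite product of distributions.  There
   1{r > 0} <= sum_i 1{U_i <= t_(r_i)} / r_i, where r_i is the rank recomputed
   with U_i moved to the lowest cell; r_i does not depend on U_i, and
   super-uniformity gives P(U_i <= t_k) / k <= delta / N, so the sum over i has
   expectation at most delta. *)

Section FfunUpdate.
Variables (I : finType) (J : Type).

Definition ffun_upd (f : {ffun I -> J}) (i : I) (x : J) : {ffun I -> J} :=
  [ffun j => if j == i then x else f j].

Lemma ffun_upd_same (f : {ffun I -> J}) i x : ffun_upd f i x i = x.
Proof. by rewrite ffunE eqxx. Qed.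

Lemma ffun_upd_other (f : {ffun I -> J}) i j x : j != i -> ffun_upd f i x j = f j.
Proof. by rewrite ffunE => /negbTE ->. Qed.

Lemma ffun_upd_upd (f : {ffun I -> J}) i x y :
  ffun_upd (ffun_upd f i x) i y = ffun_upd f i y.
Proof. by apply/ffunP => j; rewrite !ffunE; case: eqP. Qed.

Lemma ffun_upd_id (f : {ffun I -> J}) i : ffun_upd f i (f i) = f.
Proof. by apply/ffunP => j; rewrite !ffunE; case: eqP => // ->. Qed.

End FfunUpdate.

Section ProductWeights.
Variables (R : comPzRingType) (I J : finType) (q : I -> J -> R).

Lemma sum_prod_coord_split (F : {ffun I -> J} -> J -> R) i x0 :
  (forall f x, F (ffun_upd f i x) = F f) ->
  \sum_(f : {ffun I -> J}) (\prod_j q j (f j)) * F f (f i) =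
  \sum_(g : {ffun I -> J} | g i == x0) (\prod_(j | j != i) q j (g j)) *
    \sum_x q i x * F g x.
Proof.
move=> Fi.
rewrite (partition_big (fun f : {ffun I -> J} => f i) xpredT) //=.
under [RHS]eq_bigr do rewrite mulr_sumr.
rewrite [RHS]exchange_big /=; apply: eq_bigr => x _.
rewrite (reindex_onto (fun g => ffun_upd g i x) (fun f => ffun_upd f i x0)) /=; last first.
  by move=> f /eqP <-; rewrite ffun_upd_upd ffun_upd_id.
apply: eq_big => [g|g _].
  rewrite ffun_upd_same eqxx ffun_upd_upd /=.
  apply/eqP/eqP => [<-|<-]; first by rewrite ffun_upd_same.
  by rewrite ffun_upd_id.
rewrite (bigD1 i) //= ffun_upd_same Fi mulrCA mulrA.
congr (_ * _ * _); apply: eq_bigr => j ji.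
by rewrite ffun_upd_other.
Qed.

Lemma sum_prod_integrate_coord (F : {ffun I -> J} -> J -> R) i :
  \sum_x q i x = 1 -> (forall f x, F (ffun_upd f i x) = F f) ->
  \sum_(f : {ffun I -> J}) (\prod_j q j (f j)) * F f (f i) =
  \sum_(f : {ffun I -> J}) (\prod_j q j (f j)) * \sum_x q i x * F f x.
Proof.
move=> q1 Fi; have [f0 _|no_f] := pickP (@predT {ffun I -> J}); last first.
  by rewrite !big_pred0.
rewrite (sum_prod_coord_split (f0 i) Fi).
rewrite (@sum_prod_coord_split (fun f _ => \sum_x q i x * F f x) i (f0 i)); last first.
  by move=> f x; rewrite Fi.
by apply: eq_bigr => g _; rewrite -mulr_suml q1 mul1r.
Qed.

End ProductWeights.

Section SimesRank.
Variable n : nat.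
Implicit Types f : {ffun 'I_n -> 'I_n.+1}.

Definition count_lt f (k : nat) : nat := \sum_(j < n) (f j < k)%N.

Definition simes_rank f : nat := \max_(k : 'I_n.+1 | (k <= count_lt f k)%N) k.

Lemma simes_rank_le f : (simes_rank f <= n)%N.
Proof. by apply/bigmax_leqP => k _; rewrite -ltnS. Qed.

Lemma leq_simes_rank f (k : 'I_n.+1) : (k <= count_lt f k)%N -> (k <= simes_rank f)%N.
Proof. exact: leq_bigmax_cond. Qed.

Lemma simes_rank_count f : (simes_rank f <= count_lt f (simes_rank f))%N.
Proof.
have nonempty : (0 < #|[pred k : 'I_n.+1 | (k <= count_lt f k)%N]|)%N.
  by apply/card_gt0P; exists ord0.
have [k kP kmax] := eq_bigmax_cond (fun k : 'I_n.+1 => nat_of_ord k) nonempty.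
by rewrite /simes_rank kmax.
Qed.

Lemma count_lt_upd0 f i k : (f i < k)%N -> count_lt (ffun_upd f i ord0) k = count_lt f k.
Proof.
move=> fik; apply: eq_bigr => j _; rewrite ffunE; case: eqP => // ->.
by rewrite fik (leq_ltn_trans (leq0n _) fik).
Qed.

Lemma simes_rank_upd0 f i :
  (f i < simes_rank f)%N -> simes_rank (ffun_upd f i ord0) = simes_rank f.
Proof.
move=> fiR; apply/eqP; rewrite eqn_leq; apply/andP; split.
  apply/bigmax_leqP => k kP; have [fik|] := ltnP (f i) k.
    by apply: leq_simes_rank; rewrite -(count_lt_upd0 fik).
  by move=> /leq_ltn_trans/(_ fiR)/ltnW.
have rn : (simes_rank f < n.+1)%N by rewrite ltnS simes_rank_le.
apply: (@leq_simes_rank _ (Ordinal rn)) => /=.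
by rewrite count_lt_upd0 // simes_rank_count.
Qed.

End SimesRank.

Section DiscreteSimes.
Variables (R : realFieldType) (n : nat) (delta : R) (q : 'I_n -> 'I_n.+1 -> R).
Hypotheses (n_gt0 : (0 < n)%N) (dl_ge0 : 0 <= delta).
Hypotheses (q_ge0 : forall i m, 0 <= q i m) (q_sum1 : forall i, \sum_m q i m = 1).
Hypothesis q_cdf : forall i k, (0 < k <= n)%N ->
  \sum_(m : 'I_n.+1 | (m < k)%N) q i m <= k%:R * delta / n%:R.

(* For k = 0 this is 0, as x / 0 = 0. *)
Definition below_weight (k : nat) (x : 'I_n.+1) : R := ((x < k)%N)%:R / k%:R.

Definition simes_weight (f : {ffun 'I_n -> 'I_n.+1}) i : R :=
  below_weight (simes_rank (ffun_upd f i ord0)) (f i).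

Lemma below_weight_ge0 k x : 0 <= below_weight k x.
Proof. by rewrite divr_ge0. Qed.

Lemma sum_prod_q : \sum_(f : {ffun 'I_n -> 'I_n.+1}) \prod_i q i (f i) = 1.
Proof. by rewrite -bigA_distr_bigA big1. Qed.

Lemma simes_rank_gt0_weight f :
  (0 < simes_rank f)%N -> 1 <= \sum_i simes_weight f i.
Proof.
move=> rank_gt0.
apply: (@le_trans _ _ (\sum_i below_weight (simes_rank f) (f i))).
  rewrite -mulr_suml -natr_sum ler_pdivlMr ?ltr0n // mul1r ler_nat.
  exact: simes_rank_count.
apply: ler_sum => i _; rewrite /simes_weight.
have [fiR|fiR] := ltnP (f i) (simes_rank f); first by rewrite simes_rank_upd0.
by rewrite /below_weight ltnNge fiR mul0r below_weight_ge0.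
Qed.

Lemma sum_below_weight_le i k : (k <= n)%N ->
  \sum_x q i x * below_weight k x <= delta / n%:R.
Proof.
move=> kn; have [->|k_gt0] := posnP k.
  by rewrite big1 ?divr_ge0 // => x _; rewrite /below_weight ltn0 mul0r mulr0.
rewrite (bigID (fun x : 'I_n.+1 => (x < k)%N)) /= [X in _ + X]big1 ?addr0; last first.
  by move=> x /negbTE xk; rewrite /below_weight xk mul0r mulr0.
rewrite (eq_bigr (fun x => q i x / k%:R)); last by move=> x xk; rewrite /below_weight xk mul1r.
rewrite -mulr_suml ler_pdivrMr ?ltr0n // mulrC mulrA.
by apply: q_cdf; rewrite k_gt0.
Qed.

Lemma expected_simes_weight_le i :
  \sum_(f : {ffun 'I_n -> 'I_n.+1}) (\prod_j q j (f j)) * simes_weight f i <= delta / n%:R.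
Proof.
rewrite (@sum_prod_integrate_coord _ _ _ q
  (fun f => below_weight (simes_rank (ffun_upd f i ord0))) i) //; last first.
  by move=> f x; rewrite ffun_upd_upd.
apply: (@le_trans _ _
  (\sum_(f : {ffun 'I_n -> 'I_n.+1}) (\prod_j q j (f j)) * (delta / n%:R))).
  apply: ler_sum => f _; apply: ler_wpM2l; first exact: prodr_ge0.
  exact/sum_below_weight_le/simes_rank_le.
by rewrite -mulr_suml sum_prod_q mul1r.
Qed.

Theorem discrete_simes :
  \sum_(f : {ffun 'I_n -> 'I_n.+1} | (0 < simes_rank f)%N) \prod_i q i (f i) <= delta.
Proof.
have prod_ge0 (f : {ffun 'I_n -> 'I_n.+1}) : 0 <= \prod_i q i (f i) by exact: prodr_ge0.
apply: (@le_trans _ _ (\sum_(f : {ffun 'I_n -> 'I_n.+1})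
                         (\prod_j q j (f j)) * \sum_i simes_weight f i)).
  rewrite [X in _ <= X](bigID (fun f => (0 < simes_rank f)%N)) /= -[X in X <= _]addr0.
  apply: lerD; last first.
    by apply: sumr_ge0 => f _; rewrite mulr_ge0 // sumr_ge0 // => i _; exact: below_weight_ge0.
  apply: ler_sum => f rank_gt0; rewrite -[X in X <= _]mulr1.
  by apply: ler_wpM2l => //; exact: simes_rank_gt0_weight.
under eq_bigr do rewrite mulr_sumr.
rewrite exchange_big /=.
apply: (@le_trans _ _ (\sum_(i < n) (delta / n%:R))).
  by apply: ler_sum => i _; exact: expected_simes_weight_le.
by rewrite sumr_const card_ord -[_ *+ n]mulr_natr divfK // pnatr_eq0 -lt0n.
Qed.

End DiscreteSimes.

Section FiniteValued.
Context d (T : measurableType d) (R : realType) (J : finType) (h : T -> J).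
Hypothesis h_fibre : forall j, measurable (h @^-1` [set j]).

Lemma preimage_pred_bigcup (S : pred J) :
  [set w | S (h w)] = \bigcup_(j in [set j | S j]) h @^-1` [set j].
Proof. by apply/seteqP; split => [w Sw|w [j Sj /= ->]] //; exists (h w). Qed.

Lemma measurable_preimage_pred (S : pred J) : measurable [set w | S (h w)].
Proof.
by rewrite preimage_pred_bigcup; apply: fin_bigcup_measurable => //; exact: finite_finset.
Qed.

Lemma measure_preimage_pred (mu : {measure set T -> \bar R}) (S : pred J) :
  mu [set w | S (h w)] = (\sum_(j | S j) mu (h @^-1` [set j]))%E.
Proof.
rewrite preimage_pred_bigcup measure_fin_bigcup; last 3 first.
- exact: finite_finset.
- exact: trivIset_preimage1.
- by move=> j _; exact: h_fibre.
rewrite fsbig_finite; last exact: finite_finset.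
rewrite -big_enum; apply/perm_big/uniq_perm; [exact: finmap.fset_uniq|exact: enum_uniq|].
move=> j; rewrite mem_enum in_fset_set; last exact: finite_finset.
by apply/idP/idP; rewrite in_setE.
Qed.

End FiniteValued.

Section Bucket.
Variables (R : realType) (N : nat) (c : nat -> R).
Hypothesis c_mono : {homo c : a b / (a <= b)%N >-> a <= b}.

(* The least m < N with u <= c (m + 1), and N if there is none. *)
Definition bucket (u : R) : 'I_N.+1 := inord (find (fun k => u <= c k.+1) (iota 0 N)).

Lemma bucket_lt u k : (0 < k <= N)%N -> (bucket u < k)%N = (u <= c k).
Proof.
move=> /andP[k_gt0 kN]; rewrite /bucket inordK; last first.
  by rewrite ltnS (leq_trans (find_size _ _)) ?size_iota.
set p := fun k => u <= c k.+1.
apply/idP/idP => [lt_find|le_u].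
  have has_k : has p (iota 0 N).
    by rewrite has_find size_iota (leq_trans lt_find).
  have := nth_find 0%N has_k; rewrite nth_iota ?add0n ?(leq_trans lt_find) //.
  by move/le_trans; apply; apply: c_mono.
rewrite ltnNge; apply/negP => ge_find.
have lt_k : (k.-1 < find p (iota 0 N))%N by rewrite prednK.
have := before_find 0%N lt_k; rewrite nth_iota ?add0n; last by rewrite prednK.
by rewrite /p prednK // le_u.
Qed.

Lemma measurable_bucket_lt k : measurable [set u | (bucket u < k)%N].
Proof.
have [->|k_gt0] := posnP k.
  by rewrite [X in measurable X](_ : _ = set0) //; apply/seteqP; split => u //=; rewrite ltn0.
have [kN|Nk] := leqP k N.
  rewrite [X in measurable X](_ : _ = [set` `]-oo, c k]]); first exact: measurable_itv.
  by apply/seteqP; split => u /=; rewrite in_itv /= bucket_lt ?k_gt0.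
rewrite [X in measurable X](_ : _ = setT) //.
by apply/seteqP; split => u //= _; exact: leq_trans (ltn_ord _) Nk.
Qed.

Lemma measurable_bucket_eq (m : 'I_N.+1) : measurable [set u | bucket u = m].
Proof.
rewrite [X in measurable X](_ : _ = [set u | (bucket u < m.+1)%N] `\`
                                     [set u | (bucket u < m)%N]).
  by apply: measurableD; exact: measurable_bucket_lt.
apply/seteqP; split => u /=; first by move=> ->; rewrite ltnSn ltnn.
by move=> [le_m /negP]; rewrite -leqNgt => ge_m; apply/val_inj/eqP; rewrite eqn_leq -ltnS le_m.
Qed.

End Bucket.

Section SimesProbability.
Context d (T : measurableType d) (R : realType) (P : probability T R).
Context (N : nat) (U : 'I_N -> T -> R) (delta : R).
Hypotheses (N_gt0 : (0 < N)%N) (delta_gt0 : 0 < delta) (delta_le1 : delta <= 1).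
Hypothesis U_meas : forall i, measurable_fun setT (U i).
Hypotheses (U_indep : mutually_independent_rv P U) (U_sup : forall i, super_uniform P (U i)).

Definition simes_threshold (k : nat) : R := k%:R * delta / N%:R.

Definition simes_cell w : {ffun 'I_N -> 'I_N.+1} :=
  [ffun i => bucket N simes_threshold (U i w)].

Definition bucket_prob i (m : 'I_N.+1) : R :=
  fine (P (U i @^-1` [set u | bucket N simes_threshold u = m])).

Lemma simes_threshold_homo : {homo simes_threshold : a b / (a <= b)%N >-> a <= b}.
Proof.
move=> a b ab; rewrite /simes_threshold ler_wpM2r ?invr_ge0 ?ler0n //.
by rewrite ler_wpM2r ?ler_nat // ltW.
Qed.

Lemma measurable_U_preimage i (Y : set R) : measurable Y -> measurable (U i @^-1` Y).
Proof. by move=> mY; rewrite -[_ @^-1` _]setTI; exact: U_meas. Qed.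

Lemma measurable_U_bucket i (m : 'I_N.+1) :
  measurable (U i @^-1` [set u | bucket N simes_threshold u = m]).
Proof.
by apply: measurable_U_preimage; apply: measurable_bucket_eq; exact: simes_threshold_homo.
Qed.

Lemma simes_cell_fibreE f : simes_cell @^-1` [set f] =
  \bigcap_(i in [set i | i \in [set: 'I_N]%SET])
    U i @^-1` [set u | bucket N simes_threshold u = f i].
Proof.
apply/seteqP; split => w /=; first by move=> <- i _; rewrite ffunE.
by move=> wf; apply/ffunP => i; rewrite ffunE; apply: wf; rewrite /= inE.
Qed.

Lemma measurable_simes_cell_fibre f : measurable (simes_cell @^-1` [set f]).
Proof.
rewrite simes_cell_fibreE; apply: fin_bigcap_measurable; first exact: finite_finset.
by move=> i _; exact: measurable_U_bucket.
Qed.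

Lemma bucket_probE i m :
  P (U i @^-1` [set u | bucket N simes_threshold u = m]) = (bucket_prob i m)%:E.
Proof. by rewrite fineK // fin_num_measure //; exact: measurable_U_bucket. Qed.

Lemma bucket_prob_ge0 i m : 0 <= bucket_prob i m.
Proof. exact: fine_ge0. Qed.

Lemma P_U_bucket_pred i (S : pred 'I_N.+1) :
  P [set w | S (bucket N simes_threshold (U i w))] = (\sum_(m | S m) bucket_prob i m)%:E.
Proof.
rewrite -sumEFin (measure_preimage_pred (fun m => measurable_U_bucket i m)).
by apply: eq_bigr => m _; exact: bucket_probE.
Qed.

Lemma sum_bucket_prob i : \sum_m bucket_prob i m = 1.
Proof.
apply/EFin_inj; rewrite -(P_U_bucket_pred i xpredT).
by rewrite [X in P X](_ : _ = setT) ?probability_setT //; apply/seteqP.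
Qed.

Lemma bucket_prob_cdf i k : (0 < k <= N)%N ->
  \sum_(m : 'I_N.+1 | (m < k)%N) bucket_prob i m <= simes_threshold k.
Proof.
move=> kN; rewrite -lee_fin -P_U_bucket_pred.
rewrite [X in P X](_ : _ = [set w | U i w <= simes_threshold k]); last first.
  by apply/seteqP; split => w /=; rewrite bucket_lt //; exact: simes_threshold_homo.
apply: (U_sup i).1; rewrite /simes_threshold divr_ge0 ?mulr_ge0 ?ler0n ?(ltW delta_gt0) //=.
rewrite ler_pdivrMr ?ltr0n // mul1r.
apply: (@le_trans _ _ (k%:R * 1)); first by rewrite ler_wpM2l ?ler0n.
by rewrite mulr1 ler_nat; case/andP: kN.
Qed.

Lemma P_simes_cell_fibre f :
  P (simes_cell @^-1` [set f]) = (\prod_i bucket_prob i (f i))%:E.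
Proof.
rewrite simes_cell_fibreE U_indep; last first.
  by move=> i _; exact: measurable_bucket_eq simes_threshold_homo _.
rewrite -prodEFin; apply: eq_big => [i|i _]; first by rewrite inE.
exact: bucket_probE.
Qed.

Lemma P_simes_rank_gt0 : (P [set w | (0 < simes_rank (simes_cell w))%N] <= delta%:E)%E.
Proof.
rewrite (measure_preimage_pred measurable_simes_cell_fibre _ (fun f => 0 < simes_rank f)%N).
rewrite (eq_bigr (fun f : {ffun 'I_N -> 'I_N.+1} => (\prod_i bucket_prob i (f i))%:E));
  last first.
  by move=> f _; exact: P_simes_cell_fibre.
rewrite sumEFin lee_fin; apply: discrete_simes; rewrite ?ltW //.
- exact: bucket_prob_ge0.
- exact: sum_bucket_prob.
- exact: bucket_prob_cdf.
Qed.

Lemma simes_threshold_divE k : simes_threshold k / delta = k%:R / N%:R.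
Proof. by rewrite /simes_threshold mulrAC mulfK ?gt_eqF. Qed.

Lemma simes_threshold_gt0 k : (0 < k)%N -> 0 < simes_threshold k.
Proof. by move=> k_gt0; rewrite /simes_threshold !mulr_gt0 ?invr_gt0 ?ltr0n. Qed.

Lemma count_lt_simes_cell w k : (0 < k <= N)%N ->
  count_lt (simes_cell w) k = \sum_i ((U i w <= simes_threshold k)%R : nat).
Proof.
by move=> kN; apply: eq_bigr => i _; rewrite ffunE bucket_lt //; exact: simes_threshold_homo.
Qed.

Lemma simes_rank_violation w (k := simes_rank (simes_cell w)) : (0 < k)%N ->
  simes_threshold k / delta <= (\sum_i ((U i w <= simes_threshold k)%R%:R : R)) / N%:R.
Proof.
move=> k_gt0; rewrite simes_threshold_divE -natr_sum -count_lt_simes_cell; last first.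
  by rewrite k_gt0 simes_rank_le.
by rewrite ler_wpM2r ?invr_ge0 ?ler0n // ler_nat simes_rank_count.
Qed.

Lemma violation_simes_rank_gt0 w t : 0 < t ->
  t / delta <= (\sum_i ((U i w <= t)%R%:R : R)) / N%:R ->
  (0 < simes_rank (simes_cell w))%N.
Proof.
rewrite -natr_sum; set n := (\sum_i _)%N => t_gt0 le_tn.
have n_gt0 : (0 < n)%N.
  rewrite lt0n; apply: contraTneq le_tn => ->.
  by rewrite mul0r -ltNge divr_gt0.
have nN : (n <= N)%N.
  by rewrite -[X in (_ <= X)%N]card_ord -sum1_card leq_sum // => i _; exact: leq_b1.
have t_le : t <= simes_threshold n.
  have delta_inv_gt0 : 0 < delta^-1 by rewrite invr_gt0.
  by rewrite -(ler_pM2r delta_inv_gt0) simes_threshold_divE.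
have n_lt : (n < N.+1)%N by rewrite ltnS.
apply: (leq_trans n_gt0); apply: (@leq_simes_rank _ _ (Ordinal n_lt)) => /=.
rewrite count_lt_simes_cell ?n_gt0 //; apply: leq_sum => i _.
by have [le_t|//] := boolP (U i w <= t); rewrite (le_trans le_t t_le).
Qed.

Lemma simes_eventE :
  [set w | forall t, 0 < t -> (\sum_i ((U i w <= t)%R%:R : R)) / N%:R < t / delta] =
  ~` [set w | (0 < simes_rank (simes_cell w))%N].
Proof.
apply/seteqP; split => w /=.
  move=> no_violation rank_gt0; have := simes_rank_violation rank_gt0.
  by rewrite leNgt no_violation // simes_threshold_gt0.
move=> rank_eq0 t t_gt0; rewrite ltNge; apply/negP.
by move=> /(violation_simes_rank_gt0 t_gt0).
Qed.

End SimesProbability.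

Unset Implicit Arguments.

Theorem mainTheorem1 (d : measure_display) (T : measurableType d)
  (R : realType) (P : probability T R) (N : nat) (U : 'I_N -> T -> R) :
  (1 <= N)%N ->
  (forall i, measurable_fun setT (U i)) ->
  mutually_independent_rv P U ->
  (forall i, super_uniform P (U i)) ->
  forall delta : R, 0 < delta <= 1 ->
  ((1 - delta)%:E <= P [set w | forall t : R, (0 < t)%R ->
        ((\sum_(i < N) ((U i w <= t)%R%:R : R)) / N%:R < t / delta)%R])%E.
Proof.
move=> N_gt0 U_meas U_indep U_sup delta /andP[delta_gt0 delta_le1].
rewrite simes_eventE // probability_setC; last first.
  exact: (measurable_preimage_pred (measurable_simes_cell_fibre delta_gt0 U_meas)
           (fun f => 0 < simes_rank f)%N).
rewrite EFinB; apply: leeB => //.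
exact: P_simes_rank_gt0.
Qed.
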